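(* Consider the protocol $P_{RL}$ with parameter $N$ on a directed ring of size $n$ with $2\le n\le N$. The set $\mathcal{C}_{PB}$ of configurations (defined in the context) is closed: no configuration outside $\mathcal{C}_{PB}$ is reachable from a configuration in $\mathcal{C}_{PB}$.
   Context: Model. A population is a directed ring of $n\ge 2$ anonymous agents $u_0,\dots,u_{n-1}$ (indices modulo $n$) with arcs $e_i=(u_i,u_{i+1})$. A configuration $C$ assigns a state to each agent; $C\to C'$ means that $C'$ is obtained from $C$ by one interaction on some arc $e_i$, in which initiator $u_i$ and responder $u_{i+1}$ update their states by the transition function and all other agents keep their states. A configuration is reachable from $C$ if it is obtained from $C$ by finitely many such steps. Protocol $P_{RL}$ (parameter $N$). Each agent has variables $\mathit{leader}\in\{0,1\}$, $\mathit{bullet}\in\{0,1,2\}$, $\mathit{shield}\in\{0,1\}$, $\mathit{signal}\in\{0,1\}$, $\mathit{dist}\in\{0,\dots,N\}$. In an interaction with initiator $l$ and responder $r$ the following are executed in order: 1. If $l.\mathit{leader}=1$ then $l.\mathit{dist}\gets 0$. 2. If $r.\mathit{leader}=1$ then $r.\mathit{dist}\gets 0$; else if $r.\mathit{bullet}=0$ then $r.\mathit{dist}\gets\min(l.\mathit{dist}+1,N)$. 3. If $r.\mathit{dist}=N$ then $r.\mathit{leader}\gets1$, $r.\mathit{bullet}\gets2$, $r.\mathit{shield}\gets1$, $r.\mathit{signal}\gets0$, $r.\mathit{dist}\gets0$. 4. If $l.\mathit{leader}=1$ and $l.\mathit{signal}=1$ then $l.\mathit{bullet}\gets2$, $l.\mathit{shield}\gets1$,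 $l.\mathit{signal}\gets0$. 5. If $r.\mathit{leader}=1$ and $r.\mathit{signal}=1$ then $r.\mathit{bullet}\gets1$, $r.\mathit{shield}\gets0$, $r.\mathit{signal}\gets0$. 6. If $l.\mathit{bullet}>0$ and $r.\mathit{leader}=1$: set $r.\mathit{leader}\gets0$ if ($l.\mathit{bullet}=2$ and $r.\mathit{shield}=0$); then $l.\mathit{bullet}\gets0$. Else, if $l.\mathit{bullet}>0$ and $r.\mathit{leader}=0$: if $r.\mathit{bullet}=0$ then $r.\mathit{bullet}\gets l.\mathit{bullet}$; then $l.\mathit{bullet}\gets0$ and $r.\mathit{signal}\gets0$. 7. $l.\mathit{signal}\gets\max(l.\mathit{signal},r.\mathit{signal},r.\mathit{leader})$. An agent is a leader if $\mathit{leader}=1$ and a follower otherwise. Definitions. In a configuration with at least one leader, $\mathrm{dist}_L(i)=\min\{j\ge0: u_{i-j}.\mathit{leader}=1\}$. The predicate $\mathrm{peaceful}(i)$ holds iff $u_{i-\mathrm{dist}_L(i)}.\mathit{shield}=1$ and $u_{i-j}.\mathit{signal}=0$ for all $j=0,1,\dots,\mathrm{dist}_L(i)$. $\mathcal{C}_{PB}$ is the set of configurations in which at least one agent is a leader and every agent $u_j$ with $u_j.\mathit{bullet}=2$ satisfies $\mathrm{peaceful}(j)$. *)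

From mathcomp Require Import all_boot.
Set Implicit Arguments. Unset Strict Implicit. Unset Printing Implicit Defensive.

Record state (N : nat) := St {
  leader : bool; bullet : 'I_3; shield : bool; signal : bool; dist : 'I_N.+1 }.

Arguments St {N}.

Definition b0 : 'I_3 := @Ordinal 3 0 isT.
Definition b1 : 'I_3 := @Ordinal 3 1 isT.
Definition b2 : 'I_3 := @Ordinal 3 2 isT.

Section Setters.
Variable N : nat.
Implicit Type s : state N.
Definition set_leader s (v : bool) : state N := St v (bullet s) (shield s) (signal s) (dist s).
Definition set_bullet s (v : 'I_3) : state N := St (leader s) v (shield s) (signal s) (dist s).
Definition set_shield s (v : bool) : state N := St (leader s) (bullet s) v (signal s) (dist s).
Definition set_signal s (v : bool) : state N := St (leader s) (bullet s) (shield s) v (dist s).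
Definition set_dist s (v : 'I_N.+1) : state N := St (leader s) (bullet s) (shield s) (signal s) v.
End Setters.

(* The transition function of P_RL: initiator l, responder r; steps 1-7
   executed in order. *)
Definition transition (N : nat) (l r : state N) : state N * state N :=
  let l := if leader l then set_dist l ord0 else l in
  let r := if leader r then set_dist r ord0
           else if (bullet r : nat) == 0 then set_dist r (inord (minn (dist l).+1 N))
           else r in
  let r := if (dist r : nat) == N then St true b2 true false ord0 else r in
  let l := if leader l && signal l
           then St (leader l) b2 true false (dist l) else l in
  let r := if leader r && signal r
           then St (leader r) b1 false false (dist r) else r in
  let '(l, r) :=
    if (0 < bullet l) && leader r then
      let r := if ((bullet l : nat) == 2) && ~~ shield r then set_leader r false else r in
      (set_bullet l b0, r)
    else if (0 < bullet l) && ~~ leader r then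
      let r := if (bullet r : nat) == 0 then set_bullet r (bullet l) else r in
      (set_bullet l b0, set_signal r false)
    else (l, r) in
  let l := set_signal l [|| signal l, signal r | leader r] in
  (l, r).

(* Configurations of the directed ring u_0,...,u_{n-1}; arc e_i = (u_i, u_{i+1}). *)
Definition config (n N : nat) := 'I_n -> state N.

Definition interact (n N : nat) (C : config n N) (i : 'I_n) : config n N :=
  let p := transition (C i) (C (ordS i)) in
  fun j => if j == i then p.1 else if j == ordS i then p.2 else C j.

Inductive reachable (n N : nat) (C : config n N) : config n N -> Prop :=
| reach_refl : reachable C C
| reach_step (C' : config n N) (i : 'I_n) :
    reachable C C' -> reachable C (interact C' i).

Definition back (n : nat) (i : 'I_n) (j : nat) : 'I_n := iter j (@ord_pred n) i.

Definition has_leader (n N : nat) (C : config n N) : Prop :=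
  exists i : 'I_n, leader (C i).

(* d = dist_L(i) = min { j >= 0 : u_{i-j}.leader = 1 } *)
Definition is_distL (n N : nat) (C : config n N) (i : 'I_n) (d : nat) : Prop :=
  leader (C (back i d)) /\ (forall j, j < d -> ~~ leader (C (back i j))).

Definition peaceful (n N : nat) (C : config n N) (i : 'I_n) : Prop :=
  exists d, is_distL C i d /\
    shield (C (back i d)) /\ (forall j, j <= d -> signal (C (back i j)) = false).

Definition C_PB (n N : nat) (C : config n N) : Prop :=
  has_leader C /\
  (forall j : 'I_n, (bullet (C j) : nat) = 2 -> peaceful C j).

From mathcomp Require Import all_boot.
Set Implicit Arguments. Unset Strict Implicit. Unset Printing Implicit Defensive.

(* An interaction on the arc (u_i, u_(i+1)) changes only these two agents, and
   what it can do to them is settled by enumerating the transition function.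
   A bullet 2 at u_j stays peaceful, by induction on dist_L(j): on the way back
   to the leader all other agents are unchanged, u_(i+1) ends up either a
   shielded silent leader or still a silent follower, and in the latter case
   u_i stays silent and keeps its shield.  A new bullet 2 appears only at
   u_(i+1), as a peaceful leader or behind a peaceful u_i.  A leader dies only
   when u_i fires a bullet 2 at an unshielded or signalling u_(i+1); the
   peaceful leader behind u_i is then another agent, and it survives. *)

(* [transition] with the test [dist r == N] of step 3 replaced by [c]: the
   fields other than [dist] of the result then depend only on finitely many
   bits, which can be enumerated. *)
Definition transition_with (N : nat) (l r : state N) (c : bool) :
    state N * state N :=
  let l := if leader l then set_dist l ord0 else l in
  let r := if leader r then set_dist r ord0
           else if (bullet r : nat) == 0 then set_dist r (inord (minn (dist l).+1 N))
           else r in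
  let r := if c then St true b2 true false ord0 else r in
  let l := if leader l && signal l
           then St (leader l) b2 true false (dist l) else l in
  let r := if leader r && signal r
           then St (leader r) b1 false false (dist r) else r in
  let '(l, r) :=
    if (0 < bullet l) && leader r then
      let r := if ((bullet l : nat) == 2) && ~~ shield r then set_leader r false else r in
      (set_bullet l b0, r)
    else if (0 < bullet l) && ~~ leader r then
      let r := if (bullet r : nat) == 0 then set_bullet r (bullet l) else r in
      (set_bullet l b0, set_signal r false)
    else (l, r) in
  let l := set_signal l [|| signal l, signal r | leader r] in
  (l, r).

Lemma transition_withE N (l r : state N) :
  exists c, transition l r = transition_with l r c.
Proof. by eexists. Qed.

Ltac transition_cases l r :=
  case: (transition_withE l r) => + ->;
  case: l => [[] [[|[|[|?]]] ?] [] [] ?]; last by [];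
  case: r => [[] [[|[|[|?]]] ?] [] [] ?]; last by [];
  by case.

Definition peaceful_leader (N : nat) (s : state N) : bool :=
  [&& leader s, shield s & ~~ signal s].

Section Transition.
Variables (N : nat) (l r : state N).
Local Notation l' := (transition l r).1.
Local Notation r' := (transition l r).2.

Lemma transition_leader_l : leader l' = leader l.
Proof. transition_cases l r. Qed.

Lemma transition_bullet_l : (bullet l' : nat) != 2.
Proof. transition_cases l r. Qed.

Lemma transition_peaceful_leader_r :
  peaceful_leader r -> peaceful_leader r'.
Proof. transition_cases l r. Qed.

Lemma transition_new_leader_r :
  ~~ leader r -> leader r' -> peaceful_leader r'.
Proof. transition_cases l r. Qed.

Lemma transition_silent_r : ~~ signal r -> ~~ signal r'.
Proof. transition_cases l r. Qed.

Lemma transition_silent_l : ~~ signal l -> ~~ leader r' -> ~~ signal r' ->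
  ~~ signal l' && (shield l' == shield l).
Proof. transition_cases l r. Qed.

Lemma transition_bullet2_r : (bullet r' : nat) == 2 -> (bullet r : nat) != 2 ->
  peaceful_leader r' ||
  [&& ~~ leader r, ~~ leader r', ~~ signal r' &
      peaceful_leader l' || ((bullet l : nat) == 2)].
Proof. transition_cases l r. Qed.

Lemma transition_killed_r : leader r -> ~~ leader r' ->
  leader l || ((bullet l : nat) == 2) && (~~ shield r || signal r).
Proof. transition_cases l r. Qed.

End Transition.

Section Ring.
Variables n N : nat.
Implicit Types (C : config n N) (j x : 'I_n).

Lemma back_succ x t : back x t.+1 = back (back x 1) t.
Proof. exact: iterSr. Qed.

Lemma back1_ordS x : back (ordS x) 1 = x.
Proof. exact: ordSK. Qed.

Lemma ordS_back1 x : ordS (back x 1) = x.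
Proof. exact: ord_predK. Qed.

Definition peaceful_at C j d : Prop :=
  is_distL C j d /\ shield (C (back j d)) /\
  (forall t, t <= d -> signal (C (back j t)) = false).

Lemma peaceful_at0 C j : peaceful_at C j 0 <-> peaceful_leader (C j).
Proof.
split=> [[[lj _] [sj /(_ 0 isT) /negbT]] | /and3P [lj sj /negbTE qj]].
  by rewrite /peaceful_leader lj sj.
split; first by split.
by split=> // t; rewrite leqn0 => /eqP ->.
Qed.

Lemma peaceful_atS C j d : peaceful_at C j d.+1 <->
  [/\ ~~ leader (C j), ~~ signal (C j) & peaceful_at C (back j 1) d].
Proof.
rewrite /peaceful_at /is_distL back_succ.
split=> [[[ld nl] [sd q]] | [nlj /negbTE qj [[ld nl] [sd q]]]].
  split; [exact: (nl 0) | apply/negbT; exact: (q 0) | split; split=> //].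
  - by move=> t lt_td; rewrite -back_succ; apply: nl.
  - by move=> t le_td; rewrite -back_succ; apply: q.
split; split=> //.
- by case=> [|t] lt_td //; rewrite back_succ; apply: nl.
- by case=> [|t] le_td //; rewrite back_succ; apply: q.
Qed.

Section Interaction.
Hypothesis n_gt1 : 1 < n.

Lemma ordS_neq x : ordS x != x.
Proof.
case: x => m lt_mn; apply/eqP => /(congr1 val) /=; move: lt_mn n_gt1.
rewrite leq_eqVlt => /predU1P [<- | /modn_small -> _]; last by move/esym/n_Sn.
by rewrite modnn => /[swap] <-.
Qed.

Variables (C : config n N) (i : 'I_n).
Local Notation C' := (interact C i).
Local Notation k := (ordS i).

Lemma interact_i : C' i = (transition (C i) (C k)).1.
Proof. by rewrite /interact eqxx. Qed.

Lemma interact_k : C' k = (transition (C i) (C k)).2.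
Proof. by rewrite /interact (negbTE (ordS_neq i)) eqxx. Qed.

Lemma interact_other j : j != i -> j != k -> C' j = C j.
Proof. by rewrite /interact => /negbTE -> /negbTE ->. Qed.

(* The side condition only matters at j = i: a walk back from another agent
   enters u_i from u_(i+1), which is then a silent follower before and after
   the step. *)
Lemma peaceful_at_interact d j : peaceful_at C j d ->
  (j = i -> [&& ~~ leader (C k), ~~ leader (C' k) & ~~ signal (C' k)]) ->
  exists d', peaceful_at C' j d'.
Proof.
elim: d j => [|d IH] j.
  move=> /peaceful_at0 pj quiet_k; exists 0; apply/peaceful_at0.
  case: (eqVneq j i) => [ji|nji].
    have /and3P [_] := quiet_k ji; rewrite interact_k => nlk' nqk'.
    move: pj; rewrite ji => /and3P [li si qi].
    rewrite /peaceful_leader interact_i transition_leader_l li.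
    by have /andP [-> /eqP ->] := transition_silent_l qi nlk' nqk'; rewrite si.
  case: (eqVneq j k) => [jk | njk]; last by rewrite interact_other.
  by rewrite jk interact_k transition_peaceful_leader_r // -jk.
move=> /peaceful_atS [nlj nqj pj1] quiet_k.
case: (eqVneq j i) => [ji|nji].
  have /and3P [_] := quiet_k ji; rewrite interact_k => nlk' nqk'.
  move: nlj nqj pj1; rewrite ji => nli nqi pi1.
  have [|d' pi1'] := IH _ pi1.
    by move=> i1_eq_i; move: (ordS_neq (back i 1)); rewrite ordS_back1 i1_eq_i eqxx.
  exists d'.+1; apply/peaceful_atS; rewrite interact_i transition_leader_l.
  by have /andP [-> _] := transition_silent_l nqi nlk' nqk'.
case: (eqVneq j k) => [jk | njk].
  move: nlj nqj pj1; rewrite jk back1_ordS => nlk nqk pi.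
  have nqk' : ~~ signal (C' k) by rewrite interact_k transition_silent_r.
  case lk': (leader (C' k)).
    by exists 0; apply/peaceful_at0; rewrite interact_k transition_new_leader_r // -interact_k.
  have [|d' pi'] := IH _ pi; first by rewrite nlk nqk' lk'.
  by exists d'.+1; apply/peaceful_atS; rewrite back1_ordS lk'.
have [|d' pj1'] := IH _ pj1.
  by move=> j1_eq_i; move: njk; rewrite -j1_eq_i ordS_back1 eqxx.
by exists d'.+1; apply/peaceful_atS; rewrite interact_other.
Qed.

Lemma has_leader_interact : C_PB C -> has_leader C'.
Proof.
case=> -[p lp] peaceful_bullets.
have keep_i : leader (C i) -> has_leader C'.
  by exists i; rewrite interact_i transition_leader_l.
case: (eqVneq p i) => [pi | npi]; first by apply: keep_i; rewrite -pi.
case: (eqVneq p k) => [pk | npk]; last by exists p; rewrite interact_other.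
case lk': (leader (C' k)); first by exists k.
move: lp lk'; rewrite pk interact_k => lk /negbT nlk'.
case/orP: (transition_killed_r lk nlk') => [/keep_i // | /andP [b2i exposed_k]].
have [d [[lx _] [sx /(_ d (leqnn d)) qx]]] := peaceful_bullets i (eqP b2i).
case: (eqVneq (back i d) i) => [xi | nxi]; first by apply: keep_i; rewrite -xi.
case: (eqVneq (back i d) k) => [xk | nxk].
  by move: exposed_k; rewrite -xk sx qx.
by exists (back i d); rewrite interact_other.
Qed.

Lemma C_PB_interact : C_PB C -> C_PB C'.
Proof.
move=> CPB; split; first exact: has_leader_interact.
case: CPB => _ peaceful_bullets j.
case: (eqVneq j i) => [-> | nji].
  by rewrite interact_i => /eqP; rewrite (negbTE (transition_bullet_l _ _)).
case: (eqVneq j k) => [-> | njk]; last first.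
  rewrite interact_other // => /peaceful_bullets [d pj].
  by apply: peaceful_at_interact pj _ => ji; rewrite ji eqxx in nji.
rewrite interact_k => /eqP b2k'.
case: (eqVneq (bullet (C k) : nat) 2) => [/peaceful_bullets [d pk] | nb2k].
  apply: peaceful_at_interact pk _ => ki.
  by move: (ordS_neq i); rewrite ki eqxx.
case/orP: (transition_bullet2_r b2k' nb2k) => [pk' | /and4P [nlk nlk' nqk' pi']].
  by exists 0; apply/peaceful_at0; rewrite interact_k.
suff [d' pi] : exists d', peaceful_at C' i d'.
  by exists d'.+1; apply/peaceful_atS; rewrite back1_ordS interact_k.
case/orP: pi' => [pi' | /eqP /peaceful_bullets [d pi]].
  by exists 0; apply/peaceful_at0; rewrite interact_i.
by apply: peaceful_at_interact pi _ => _; rewrite interact_k nlk nlk'.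
Qed.

End Interaction.
End Ring.

Theorem lemma2 (n N : nat) (Hn2 : 2 <= n) (HnN : n <= N)
  (C C' : config n N) :
  C_PB C -> reachable C C' -> C_PB C'.
Proof. by move=> CPB; elim=> // C1 i _; apply: (C_PB_interact Hn2). Qed.
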